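(* Let $F:\mathbf{Perf}(A)\to\mathbf{Perf}(A)$ be a fully faithful $k$-linear functor such that $F\circ[1]=[1]\circ F$ and $F(X_i[\alpha])=X_i[\alpha]$ for all $i\ge1$, $\alpha\in\mathbb{Z}$, and let $\delta_i\in k^*$ be defined by $F(\epsilon^i_{i[0]})=\delta_i\,\epsilon^i_{i[0]}$. Then $\delta_i$ does not depend on $i\ge1$.
   Context: $k$ is a field, $A=k[\epsilon]/(\epsilon^2)$, $\mathbf{Perf}(A)$ the homotopy category of bounded complexes of finitely generated free $A$-modules. For $i\ge1$, $X_i$ is the complex $0\to A\xrightarrow{\epsilon}\cdots\xrightarrow{\epsilon}A\to0$ with $A$ in degrees $-i,\dots,-1$, and $\epsilon^i_{i[0]}\in\mathrm{End}(X_i)$ is the homotopy class of the chain map that is multiplication by $\epsilon$ in degree $-1$ and $0$ elsewhere; $\mathrm{End}(X_i)$ has basis $\mathrm{id}_{X_i},\epsilon^i_{i[0]}$, and $F(\epsilon^i_{i[0]})$ is a nonzero multiple of $\epsilon^i_{i[0]}$. *)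

From HB Require Import structures.
From mathcomp Require Import all_boot all_order all_algebra.
Set Implicit Arguments. Unset Strict Implicit. Unset Printing Implicit Defensive.
Import Order.TTheory GRing.Theory Num.Theory.
Local Open Scope ring_scope.

(* The ring of dual numbers A = k[eps]/(eps^2), elements (a, b) = a + b eps *)
Section DualNumbers.
Variable k : fieldType.

Definition dual : Type := (k * k)%type.
HB.instance Definition _ := Choice.copy dual (k * k)%type.
HB.instance Definition _ := GRing.Zmodule.copy dual (k * k)%type.

Definition dmul (x y : dual) : dual := (x.1 * y.1, x.1 * y.2 + x.2 * y.1).
Definition done : dual := (1, 0).

Lemma dmulA : associative dmul.
Proof.
case=> a b [c d] [e f]; rewrite /dmul /=; congr (_, _); first by rewrite mulrA.
by rewrite !mulrDr !mulrDl !mulrA addrA.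
Qed.
Lemma dmulC : commutative dmul.
Proof. by case=> a b [c d]; rewrite /dmul /= mulrC addrC [b * _]mulrC [a * _]mulrC. Qed.
Lemma dmul1 : left_id done dmul.
Proof. by case=> a b; rewrite /dmul /= !mul1r mul0r addr0. Qed.
Lemma dmulDl : left_distributive dmul +%R.
Proof.
case=> a b [c d] [e f]; rewrite /dmul /=; congr (_, _); first by rewrite mulrDl.
by rewrite !mulrDl addrACA.
Qed.
Lemma done_neq0 : done != 0.
Proof. by apply/negP => /eqP [] /eqP; rewrite oner_eq0. Qed.

HB.instance Definition _ :=
  GRing.Zmodule_isComNzRing.Build dual dmulA dmulC dmul1 dmulDl done_neq0.

Definition deps : dual := (0, 1).
Definition kd (c : k) : dual := (c, 0).

End DualNumbers.

(* Bounded cochain complexes of finitely generated free R-modules.      *)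
(* Degree n term: R^(rk n) (row vectors); the differential from degree  *)
(* m to degree n is the matrix dif m n (acting on the right), which is   *)
(* required to vanish unless n = m + 1.                                 *)
Section Complexes.
Variable R : comNzRingType.

Record cplx := Cplx {
  rk : int -> nat;
  dif : forall m n : int, 'M[R]_(rk m, rk n);
  dif_off : forall m n : int, n != m + 1 -> dif m n = 0;
  dif_sq : forall n : int, dif n (n + 1) *m dif (n + 1) (n + 1 + 1) = 0;
  rk_bnd : exists a b : int, forall n : int, (n < a) || (b < n) -> rk n = 0%N
}.

Lemma dif_sq_gen (X : cplx) p q r : dif X p q *m dif X q r = 0.
Proof.
have [->|Hq] := eqVneq q (p + 1); last by rewrite dif_off // mul0mx.
have [->|Hr] := eqVneq r (p + 1 + 1); last by rewrite (@dif_off X _ _ Hr) mulmx0.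
exact: dif_sq.
Qed.

Record cmap (X Y : cplx) := CMap {
  cm : forall n : int, 'M[R]_(rk X n, rk Y n);
  cm_comm : forall n : int, dif X n (n + 1) *m cm (n + 1) = cm n *m dif Y n (n + 1)
}.

Lemma cm_comm_gen X Y (f : cmap X Y) p q :
  dif X p q *m cm f q = cm f p *m dif Y p q.
Proof.
have [->|Hq] := eqVneq q (p + 1); first exact: cm_comm.
by rewrite !dif_off // mul0mx mulmx0.
Qed.

Definition homotopic X Y (f g : cmap X Y) : Prop :=
  exists h : forall m n : int, 'M[R]_(rk X m, rk Y n),
    forall n : int, cm f n - cm g n =
      dif X n (n + 1) *m h (n + 1) n + h n (n - 1) *m dif Y (n - 1) n.

Program Definition cm_add X Y (f g : cmap X Y) : cmap X Y :=
  @CMap X Y (fun n => cm f n + cm g n) _.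
Next Obligation. by move=> X Y f g n; rewrite mulmxDr mulmxDl !cm_comm. Qed.

Program Definition cm_scale X Y (a : R) (f : cmap X Y) : cmap X Y :=
  @CMap X Y (fun n => a *: cm f n) _.
Next Obligation. by move=> X Y a f n; rewrite -scalemxAr -scalemxAl cm_comm. Qed.

Program Definition cm_comp X Y Z (f : cmap X Y) (g : cmap Y Z) : cmap X Z :=
  @CMap X Z (fun n => cm f n *m cm g n) _.
Next Obligation. by move=> X Y Z f g n; rewrite mulmxA cm_comm -!mulmxA cm_comm. Qed.

Program Definition cm_id X : cmap X X := @CMap X X (fun n => 1%:M) _.
Next Obligation. by move=> X n; rewrite mulmx1 mul1mx. Qed.

Definition cm_cast X X' Y Y' (eX : X = X') (eY : Y = Y') (f : cmap X Y) : cmap X' Y' :=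
  eq_rect X (fun Z => cmap Z Y') (eq_rect Y (fun Z => cmap X Z) f Y' eY) X' eX.

Program Definition shift (a : int) (X : cplx) : cplx :=
  @Cplx (fun n => rk X (n + a))
        (fun m n => (-1) ^+ `|a|%N *: dif X (m + a) (n + a)) _ _ _.
Next Obligation.
move=> a X m n H /=; rewrite dif_off ?scaler0 //; apply: contraNneq H => E.
by apply/eqP; apply: (addIr a); rewrite E addrAC.
Qed.
Next Obligation. by move=> a X n /=; rewrite -scalemxAl -scalemxAr dif_sq_gen !scaler0. Qed.
Next Obligation.
move=> a X; case: (rk_bnd X) => a0 [b0 Hb]; exists (a0 - a), (b0 - a) => n Hn /=.
apply: Hb; case/orP: Hn => H; apply/orP; [left|right].
  by rewrite -ltrBrDr.
by rewrite ltrBlDr in H.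
Qed.

Program Definition shift_cm (a : int) X Y (f : cmap X Y) : cmap (shift a X) (shift a Y) :=
  @CMap (shift a X) (shift a Y) (fun n => cm f (n + a)) _.
Next Obligation. by move=> a X Y f n /=; rewrite -scalemxAl -scalemxAr cm_comm_gen. Qed.

End Complexes.

Section Xi.
Variable k : fieldType.

Lemma const_eps_sq m n p (b1 b2 : bool) :
  (if b1 then const_mx (deps k) else 0 : 'M[dual k]_(m, n)) *m
  (if b2 then const_mx (deps k) else 0 : 'M[dual k]_(n, p)) = 0.
Proof.
case: b1; last by rewrite mul0mx.
case: b2; last by rewrite mulmx0.
apply/matrixP => i j; rewrite !mxE big1 // => l _; rewrite !mxE.
by rewrite /GRing.mul /= /dmul /= !mul0r !mulr0 add0r.
Qed.

(* X_i : A in degrees -i, ..., -1, differentials multiplication by eps *)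
Program Definition X (i : nat) : cplx (dual k) :=
  @Cplx _ (fun n => if (- (i%:Z) <= n) && (n <= -1) then 1%N else 0%N)
        (fun m n => if n == m + 1 then const_mx (deps k) else 0) _ _ _.
Next Obligation. by move=> i m n H /=; rewrite (negbTE H). Qed.
Next Obligation. by move=> i n; exact: const_eps_sq. Qed.
Next Obligation.
move=> i; exists (- (i%:Z)), (-1) => n /orP [] H /=.
  by rewrite leNgt H.
by rewrite [n <= -1]leNgt H andbF.
Qed.

Program Definition eps (i : nat) : cmap (X i) (X i) :=
  @CMap _ (X i) (X i) (fun n => if n == -1 then const_mx (deps k) else 0) _.
Next Obligation. by move=> i n; rewrite !const_eps_sq. Qed.

End Xi.

From HB Require Import structures.
From mathcomp Require Import all_boot all_order all_algebra.
Set Implicit Arguments. Unset Strict Implicit. Unset Printing Implicit Defensive.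
Import Order.TTheory GRing.Theory Num.Theory.
Local Open Scope ring_scope.
From mathcomp Require Import zify ring.

(* For an endomorphism g of a complex Y concentrated in degrees
   -1, ..., -N, the alternating trace  str_N g = sum_m (-1)^m tr g^(-1-m)
   (with values in A) is invariant under homotopy, because the contributions
   tr (d h) and tr (h d) of a homotopy cancel by the cyclicity of the trace,
   and it is cyclic: str (f g) = str (g f).
   The endomorphism eps_i of X_i factors as X_i --incl--> X_{i+1} --q--> X_i
   where q is eps in degree -1, while incl o q = eps_{i+1}.  Applying F,
     delta_i eps = str F(eps_i)     = str (F(incl) F(q))
                 = str (F(q) F(incl)) = str F(eps_{i+1}) = delta_{i+1} eps,
   using str eps_i = eps.  Comparing eps-components gives delta_i = delta_{i+1},
   and induction on i concludes. *)

Section AlternatingTrace.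
Variable R : comNzRingType.
Local Notation C := (cplx R).

Definition str (Y : C) (N : nat) (g : cmap Y Y) : R :=
  \sum_(m < N) (-1) ^+ m * \tr (cm g (-1 - m%:Z)).

Lemma mxtrace_size0 n (M : 'M[R]_n) : n = 0%N -> \tr M = 0.
Proof. by move=> n0; move: M; rewrite n0 => M; rewrite /mxtrace big_ord0. Qed.

Lemma alternating_telescope (g : nat -> R) N :
  \sum_(m < N) (-1) ^+ m * (g m + g m.+1) = g 0%N - (-1) ^+ N * g N.
Proof.
elim: N => [|N IH]; first by rewrite big_ord0 expr0 mul1r subrr.
by rewrite big_ord_recr /= IH exprS; ring.
Qed.

Lemma str_htp (Y : C) N (f g : cmap Y Y) :
  rk Y 0 = 0%N -> rk Y (-1 - N%:Z) = 0%N -> homotopic f g -> str N f = str N g.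
Proof.
move=> rk0 rkN [h fgh]; apply/eqP; rewrite -subr_eq0 /str -sumrB; apply/eqP.
pose gam (m : nat) := \tr (dif Y (-1 - m%:Z) (-1 - m%:Z + 1) *m h (-1 - m%:Z + 1) (-1 - m%:Z)).
have gam_pair m : \tr (cm f (-1 - m%:Z)) - \tr (cm g (-1 - m%:Z)) = gam m + gam m.+1.
  rewrite -linearB /= fgh linearD /=; congr (_ + _).
  have -> : -1 - m%:Z - 1 = -1 - (m.+1)%:Z by lia.
  have -> : -1 - m%:Z = -1 - (m.+1)%:Z + 1 by lia.
  by rewrite mxtrace_mulC.
under eq_bigr do rewrite -mulrBr gam_pair.
rewrite alternating_telescope.
have -> : gam 0%N = 0.
  by rewrite /gam mxtrace_mulC; apply: mxtrace_size0; rewrite -[in RHS]rk0; congr rk; lia.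
by rewrite [gam N]mxtrace_size0 // mulr0 subrr.
Qed.

Lemma str_scale (Y : C) N (c : R) (g : cmap Y Y) :
  str N (cm_scale c g) = c * str N g.
Proof. by rewrite /str mulr_sumr; apply: eq_bigr => m _ /=; rewrite mxtraceZ mulrCA. Qed.

Lemma str_comm (Y Z : C) N (f : cmap Y Z) (g : cmap Z Y) :
  str N (cm_comp f g) = str N (cm_comp g f).
Proof. by apply: eq_bigr => m _ /=; rewrite mxtrace_mulC. Qed.

Lemma htp_eq (Y Z : C) (f g : cmap Y Z) :
  (forall n, cm f n = cm g n) -> homotopic f g.
Proof.
by move=> fg; exists (fun _ _ => 0) => n; rewrite fg subrr mulmx0 mul0mx addr0.
Qed.

Lemma cast_comp (Y Y' Z Z' W W' : C) (eY : Y = Y') (eZ : Z = Z') (eW : W = W')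
  (f : cmap Y Z) (g : cmap Z W) :
  cm_cast eY eW (cm_comp f g) = cm_comp (cm_cast eY eZ f) (cm_cast eZ eW g).
Proof. by destruct eY, eZ, eW. Qed.

Lemma cast_htp (Y Y' Z Z' : C) (eY : Y = Y') (eZ : Z = Z') (f g : cmap Y Z) :
  homotopic f g -> homotopic (cm_cast eY eZ f) (cm_cast eY eZ g).
Proof. by destruct eY, eZ. Qed.

End AlternatingTrace.

Section MapsBetweenXi.
Variable k : fieldType.

Lemma ord_if1 (b : bool) (y : 'I_(if b then 1%N else 0%N)) : b.
Proof. by case: b y => // -[]. Qed.

Program Definition incl (i : nat) : cmap (X k i) (X k i.+1) :=
  @CMap _ (X k i) (X k i.+1) (fun n => const_mx 1) _.
Next Obligation.
rewrite /= !eqxx; apply/matrixP => x y; rewrite !mxE.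
move: (ord_if1 x) (ord_if1 y) => /andP [? ?] /andP [? ?].
under eq_bigr do rewrite !mxE mulr1.
under [RHS]eq_bigr do rewrite !mxE mul1r.
rewrite !sumr_const !card_ord.
have -> : (- i%:Z <= n + 1) && (n + 1 <= -1) by apply/andP; split; lia.
by have -> : (- (i.+1)%:Z <= n) && (n <= -1) by apply/andP; split; lia.
Qed.

Program Definition q (i : nat) : cmap (X k i.+1) (X k i) :=
  @CMap _ (X k i.+1) (X k i) (fun n => if n == -1 then const_mx (deps k) else 0) _.
Next Obligation. by rewrite !const_eps_sq. Qed.

Lemma X_in_m1 (i : nat) : (1 <= i)%N -> (- i%:Z <= -1) && (-1 <= -1 :> int).
Proof. by move=> hi; apply/andP; split; lia. Qed.

Lemma eps_factor (i : nat) :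
  homotopic (cm_comp (shift_cm 0 (incl i)) (shift_cm 0 (q i))) (shift_cm 0 (eps k i)).
Proof.
apply: htp_eq => n /=; case: eqP => [->|_]; last by rewrite mulmx0.
apply/matrixP => x y; rewrite !mxE; under eq_bigr do rewrite !mxE mul1r.
by rewrite sumr_const card_ord.
Qed.

Lemma eps_factor_swap (i : nat) : (1 <= i)%N ->
  homotopic (cm_comp (shift_cm 0 (q i)) (shift_cm 0 (incl i))) (shift_cm 0 (eps k i.+1)).
Proof.
move=> hi; apply: htp_eq => n /=; case: eqP => [->|_]; last by rewrite mul0mx.
apply/matrixP => x y; rewrite !mxE; under eq_bigr do rewrite !mxE mulr1.
by rewrite sumr_const card_ord X_in_m1.
Qed.

Lemma rk_X_out (j : nat) (n : int) : (0 <= n) || (n < - j%:Z) ->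
  rk (shift 0 (X k j)) n = 0%N.
Proof. by move=> /orP hn /=; case: ifP => // /andP [? ?]; case: hn; lia. Qed.

(* eps_i is multiplication by eps on the single copy of A in degree -1. *)
Lemma str_eps (i N : nat) : (1 <= i)%N -> str N.+1 (shift_cm 0 (eps k i)) = deps k.
Proof.
move=> hi; rewrite /str big_ord_recl big1 ?addr0 => [|m _] /=; last by rewrite linear0 mulr0.
have -> : -1 - 0%:Z + 0 = -1 by lia.
rewrite expr0 mul1r /mxtrace; under eq_bigr do rewrite mxE.
by rewrite sumr_const card_ord /= X_in_m1.
Qed.

Lemma kd_deps_inj (a b : k) : kd a * deps k = kd b * deps k -> a = b.
Proof. by rewrite /kd /deps /GRing.mul /= /dmul /= => -[]; rewrite !mulr1 !mul0r !addr0. Qed.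

End MapsBetweenXi.

Section FunctorTrace.
Variable R : comNzRingType.
Local Notation C := (cplx R).
Variable Fo : C -> C.
Variable Fm : forall X Y : C, cmap X Y -> cmap (Fo X) (Fo Y).
Hypothesis Fm_htp : forall X Y (f g : cmap X Y), homotopic f g -> homotopic (Fm f) (Fm g).
Hypothesis Fm_comp : forall X Y Z (f : cmap X Y) (g : cmap Y Z),
  homotopic (Fm (cm_comp f g)) (cm_comp (Fm f) (Fm g)).

Definition Ft (Y Y' Z Z' : C) (eY : Fo Y = Y') (eZ : Fo Z = Z') (f : cmap Y Z) :
  cmap Y' Z' := cm_cast eY eZ (Fm f).

Lemma Ft_htp (Y Y' Z Z' : C) (eY : Fo Y = Y') (eZ : Fo Z = Z') (f g : cmap Y Z) :
  homotopic f g -> homotopic (Ft eY eZ f) (Ft eY eZ g).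
Proof. by move=> fg; apply/cast_htp/Fm_htp. Qed.

Lemma Ft_comp (Y Y' Z Z' W W' : C) (eY : Fo Y = Y') (eZ : Fo Z = Z') (eW : Fo W = W')
  (f : cmap Y Z) (g : cmap Z W) :
  homotopic (Ft eY eW (cm_comp f g)) (cm_comp (Ft eY eZ f) (Ft eZ eW g)).
Proof. by rewrite /Ft -cast_comp; apply/cast_htp/Fm_comp. Qed.

Lemma str_Ft_swap (Y Z : C) (eY : Fo Y = Y) (eZ : Fo Z = Z) N
  (f : cmap Y Z) (g : cmap Z Y) :
  rk Y 0 = 0%N -> rk Y (-1 - N%:Z) = 0%N -> rk Z 0 = 0%N -> rk Z (-1 - N%:Z) = 0%N ->
  str N (Ft eY eY (cm_comp f g)) = str N (Ft eZ eZ (cm_comp g f)).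
Proof.
move=> Y0 YN Z0 ZN.
rewrite (str_htp Y0 YN (Ft_comp eY eZ eY f g)) (str_htp Z0 ZN (Ft_comp eZ eY eZ g f)).
exact: str_comm.
Qed.

End FunctorTrace.

Theorem proposition5p6 (k : fieldType)
  (Fo : cplx (dual k) -> cplx (dual k))
  (Fm : forall {X Y : cplx (dual k)}, cmap X Y -> cmap (Fo X) (Fo Y))
  (* F is well defined on homotopy classes and is a functor *)
  (Fm_htp : forall X Y (f g : cmap X Y), homotopic f g -> homotopic (Fm f) (Fm g))
  (Fm_id : forall X, homotopic (Fm (cm_id X)) (cm_id (Fo X)))
  (Fm_comp : forall X Y Z (f : cmap X Y) (g : cmap Y Z),
     homotopic (Fm (cm_comp f g)) (cm_comp (Fm f) (Fm g)))
  (* k-linear *)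
  (Fm_lin : forall X Y (c : k) (f g : cmap X Y),
     homotopic (Fm (cm_add (cm_scale (kd c) f) g))
               (cm_add (cm_scale (kd c) (Fm f)) (Fm g)))
  (* fully faithful *)
  (Ffaith : forall X Y (f g : cmap X Y), homotopic (Fm f) (Fm g) -> homotopic f g)
  (Ffull : forall X Y (h : cmap (Fo X) (Fo Y)), exists f : cmap X Y, homotopic (Fm f) h)
  (* F o [1] = [1] o F *)
  (eF1 : forall X, Fo (shift 1 X) = shift 1 (Fo X))
  (Fm_shift : forall X Y (f : cmap X Y),
     homotopic (cm_cast (eF1 X) (eF1 Y) (Fm (shift_cm 1 f))) (shift_cm 1 (Fm f)))
  (* F(X_i[alpha]) = X_i[alpha] *)
  (eFX : forall (i : nat) (alpha : int), (1 <= i)%N ->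
     Fo (shift alpha (X k i)) = shift alpha (X k i))
  (* delta_i defined by F(eps^i_{i[0]}) = delta_i eps^i_{i[0]} *)
  (delta : nat -> k)
  (hdelta : forall (i : nat) (hi : (1 <= i)%N),
     homotopic (cm_cast (eFX i 0 hi) (eFX i 0 hi) (Fm (shift_cm 0 (eps k i))))
               (cm_scale (kd (delta i)) (shift_cm 0 (eps k i)))) :
  forall i j : nat, (1 <= i)%N -> (1 <= j)%N -> delta i = delta j.
Proof.
have str_delta i N (hi : (1 <= i)%N) : (i <= N.+1)%N ->
    str N.+1 (Ft Fm (eFX i 0 hi) (eFX i 0 hi) (shift_cm 0 (eps k i))) = kd (delta i) * deps k.
  move=> iN; rewrite -(@str_eps k i N hi) -str_scale.
  by apply: (str_htp _ _ (hdelta i hi)); apply: rk_X_out; lia.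
have step i (hi : (1 <= i)%N) : delta i = delta i.+1.
  have hi1 : (1 <= i.+1)%N by [].
  have [Xi0 Xi1] : rk (shift 0 (X k i)) 0 = 0%N /\ rk (shift 0 (X k i.+1)) 0 = 0%N.
    by split; apply: rk_X_out.
  have [XiN Xi1N] : rk (shift 0 (X k i)) (-1 - (i.+1)%:Z) = 0%N /\
                    rk (shift 0 (X k i.+1)) (-1 - (i.+1)%:Z) = 0%N.
    by split; apply: rk_X_out; apply/orP; right; lia.
  apply: kd_deps_inj; rewrite -(str_delta i i hi) // -(str_delta i.+1 i hi1) //.
  rewrite -(str_htp Xi0 XiN (Ft_htp Fm_htp _ _ (eps_factor k i))).
  rewrite -(str_htp Xi1 Xi1N (Ft_htp Fm_htp _ _ (eps_factor_swap k hi))).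
  exact: (str_Ft_swap Fm_comp).
have to_one i : (1 <= i)%N -> delta i = delta 1%N.
  elim: i => [//|[//|i] IH] _; by rewrite -step // IH.
by move=> i j hi hj; rewrite (to_one i hi) (to_one j hj).
Qed.
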